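(* Let $n\ge2$. Under the diagonal top-down model on fully heterochronous ranked tree shapes with $n$ leaves, conditionally on the diagonal $(F_{k,k})_{k=0}^{2n-3}$ of the generated $\mathbf{F}$-matrix $F$, the matrix $F$ is uniformly distributed over all $\mathbf{F}$-matrices of fully heterochronous ranked tree shapes with $n$ leaves having that diagonal.
   Context: A fully heterochronous ranked tree shape with $n$ leaves is a rooted full binary tree (every node has out-degree $0$ or $2$), without leaf labels, with $n$ leaves, together with a total ordering of all $2n-1$ nodes (leaves included) such that nodes appear in increasing order along every path from the root to a leaf; the position of a node in this order, numbered $0,\dots,2n-2$, is its rank. Its $\mathbf{F}$-matrix is the $(2n-2)\times(2n-2)$ lower triangular matrix $F$, indices from $0$ to $2n-3$, where for $0\le j\le i$ the entry $F_{i,j}$ is the number of edges from a parent node $v$ to a child node $w$ with rank of $v$ at most $j$ and rank of $w$ larger than $i$ (entries with a negative index are taken to be $0$). The diagonal of such a matrix is a sequence of positive integers with $F_{0,0}=2$, $F_{k,k}=F_{k-1,k-1}\pm1$ and $F_{2n-3,2n-3}=1$; there are $C_{n-1}=\frac1n\binom{2n-2}{n-1}$ such sequences. Diagonal top-down model: first choose the diagonal $(F_{k,k})_{k=0}^{2n-3}$ uniformly at random among all such valid diagonals. Then build the remaining entries row by row: for $k=1,\dots,2n-3$, given rows $0,\dots,k-1$, choose $L\in\{0,\dots,k-1\}$ with probability $(F_{k-1,L}-F_{k-1,L-1})/F_{k-1,k-1}$ and set $F_{k,j}=F_{k-1,j}$ for $j<L$ and $F_{k,j}=F_{k-1,j}-1$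 for $L\le j\le k-1$ (with $F_{k,k}$ the already chosen diagonal entry). Equivalently, the node of rank $k$ is attached as the child end of an edge chosen uniformly at random among the $F_{k-1,k-1}$ edges whose parent has rank at most $k-1$ and whose child has not yet been placed; $L$ is the rank of that parent; the node of rank $k$ is internal if $F_{k,k}=F_{k-1,k-1}+1$ and a leaf otherwise (the last node, of rank $2n-2$, is a leaf attached to the unique remaining edge). *)

From mathcomp Require Import all_boot all_order all_algebra.
Set Implicit Arguments. Unset Strict Implicit. Unset Printing Implicit Defensive.
Import GRing.Theory Num.Theory.

(* Nodes are identified with their ranks 0 .. 2n-2.  Since the tree shape is *)
(* unlabelled and children are unordered, a ranked tree shape is exactly      *)
(* determined by its parent function: node 0 is the root (we set t 0 = 0 as a *)
(* dummy value), every node w >= 1 has a parent t w of smaller rank (ranks    *)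
(* increase along root-to-leaf paths), every node has 0 or 2 children, and    *)
(* there are n leaves.                                                         *)

Definition children (N : nat) (t : {ffun 'I_N -> 'I_N}) (v : 'I_N) : {set 'I_N} :=
  [set w : 'I_N | (0 < val w) && (t w == v)].

Definition is_rts (n : nat) (t : {ffun 'I_(2 * n - 1) -> 'I_(2 * n - 1)}) : bool :=
  [forall w : 'I_(2 * n - 1),
     if val w == 0 then val (t w) == 0 else val (t w) < val w]
  && [forall v : 'I_(2 * n - 1),
        (#|children t v| == 0) || (#|children t v| == 2)]
  && (#|[set v : 'I_(2 * n - 1) | #|children t v| == 0]| == n).
Arguments is_rts n t : clear implicits.

Definition Fmatrix (n : nat) (t : {ffun 'I_(2 * n - 1) -> 'I_(2 * n - 1)})
  : 'M[nat]_(2 * n - 2) :=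
  \matrix_(i, j) if (j <= i)%N then
     #|[set w : 'I_(2 * n - 1) | (0 < val w) && (val (t w) <= j)%N && (i < val w)%N]|
   else 0%N.

Definition ent (m : nat) (M : 'M[nat]_m) (i j : nat) : nat :=
  match (insub i : option 'I_m), (insub j : option 'I_m) with
  | Some i', Some j' => M i' j'
  | _, _ => 0%N
  end.

Definition mdiag (m : nat) (M : 'M[nat]_m) : seq nat :=
  [seq ent M k k | k <- iota 0 m].

Definition valid_diag (n : nat) (d : seq nat) : bool :=
  (size d == 2 * n - 2)
  && (nth 0 d 0 == 2)
  && (nth 0 d (2 * n - 3) == 1)
  && all (fun k => 0 < nth 0 d k) (iota 0 (2 * n - 2))
  && all (fun k => (nth 0 d k == (nth 0 d k.-1).+1) || ((nth 0 d k).+1 == nth 0 d k.-1))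
         (iota 1 (2 * n - 3)).

Definition Fmats_with_diag (n : nat) (d : seq nat) : seq 'M[nat]_(2 * n - 2) :=
  undup [seq Fmatrix t | t <- enum [pred t : {ffun 'I_(2 * n - 1) -> 'I_(2 * n - 1)} | is_rts n t && (mdiag (Fmatrix t) == d)]].

Local Open Scope ring_scope.

(* Diagonal top-down model, second stage: probability of passing from row   *)
(* k-1 of M to row k of M (the diagonal entry F_{k,k} being given).          *)
(* L is chosen with probability (F_{k-1,L} - F_{k-1,L-1}) / F_{k-1,k-1}     *)
(* (F_{k-1,-1} = 0) and then F_{k,j} = F_{k-1,j} - [L <= j] for j < k.       *)
Definition dtd_step (m : nat) (M : 'M[nat]_m) (k : nat) : rat :=
  \sum_(L < k)
    (((ent M k.-1 L)%:Z - (if val L is L'.+1 then ent M k.-1 L' else 0%N)%:Z)%:~R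
       / (ent M k.-1 k.-1)%:R)
    * (([forall j : 'I_k, ent M k j == (ent M k.-1 j - (val L <= val j))%N]) : bool)%:R.

(* Conditional probability, given that the diagonal chosen in the first      *)
(* stage is d, that the diagonal top-down model outputs the matrix M.        *)
Definition dtd_cond (n : nat) (d : seq nat) (M : 'M[nat]_(2 * n - 2)) : rat :=
  ((mdiag M == d) : bool)%:R
  * ([forall i : 'I_(2 * n - 2), forall j : 'I_(2 * n - 2),
        (val i < val j)%N ==> (M i j == 0%N)] : bool)%:R
  * \prod_(1 <= k < 2 * n - 2) dtd_step M k.
Arguments dtd_cond n d M : clear implicits.
Arguments Fmats_with_diag n d : clear implicits.
Arguments valid_diag n d : clear implicits.

(* Expanding the product of the step probabilities writes the conditional law
   of the model as a sum, over all sequences of parent choices L_1, ..., L_{2n-3},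
   of the weight of the sequence times the indicator that M is the matrix the
   sequence builds; each step is a probability distribution, so the weights sum
   to 1.  A sequence of positive weight keeps every row nondecreasing, and then
   the sequence itself is the parent function of a ranked tree shape whose
   F-matrix is the built matrix: the law is carried by the F-matrices with
   diagonal d.  Conversely, on the F-matrix of a tree the choice at step k is
   forced to be the parent of node k, with probability (number of children of
   that parent still to be placed) / F_{k-1,k-1}.  The numerators multiply to
   the product of the factorials of the numbers of children, i.e. 2^(n-1), so
   every F-matrix with diagonal d has the same probability
   2^(n-1) / prod_k d_{k-1}, and these probabilities sum to 1. *)

From mathcomp Require Import all_boot all_order all_algebra.
From mathcomp Require Import zify.
Set Implicit Arguments. Unset Strict Implicit. Unset Printing Implicit Defensive.
Import GRing.Theory Num.Theory.

(** * Parent functions and ranked tree shapes *)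

(* [prev_entry r L] is r (L - 1), with the paper's convention F_{k-1,-1} = 0. *)
Definition prev_entry (r : nat -> nat) (L : nat) : nat := if L is L'.+1 then r L' else 0.

Section ParentCounts.
Variable f : nat -> nat.

Definition nchildren (a b u : nat) : nat := \sum_(a <= w < b) (f w == u).

(* For a parent function f, [open_edges N i j] is the entry F_{i,j} of the
   F-matrix: the number of edges whose child has rank in (i, N) and whose parent
   has rank at most j. *)
Definition open_edges (N i j : nat) : nat := \sum_(i.+1 <= w < N) (f w <= j).

Lemma nchildren_ltn a b u : a < b -> nchildren a b u = (f a == u) + nchildren a.+1 b u.
Proof. exact: big_ltn. Qed.

Lemma prod_nchildren_fact U a b : (forall w, f w < U) ->
  \prod_(a <= k < b) nchildren k b (f k) = \prod_(u < U) (nchildren a b u)`!.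
Proof.
move=> fU; elim: {a}(b - a) {-2}a (erefl (b - a)) => [|l IH] a hab.
  rewrite big_geq ?big1 // => [u _|]; last by lia.
  by rewrite /nchildren big_geq //; lia.
have ab : a < b by lia.
rewrite big_ltn // (IH a.+1) ?subnS ?hab //.
rewrite [RHS](bigD1 (Ordinal (fU a))) //= nchildren_ltn // eqxx factS.
rewrite (bigD1 (Ordinal (fU a))) //= mulnA; congr (_ * _).
apply: eq_bigr => u hu; rewrite [nchildren a b u]nchildren_ltn //.
by rewrite (_ : (f a == u) = false) //; apply/eqP => e; case/eqP: hu; apply: val_inj.
Qed.

Lemma nchildren_above N u : (forall w, 0 < w <= u -> f w < w) -> u < N ->
  nchildren 1 N u = nchildren u.+1 N u.
Proof.
move=> fw uN; rewrite /nchildren (big_cat_nat _ (n := u.+1)) //= big_nat_cond big1 ?add0n //.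
move=> w /andP[/andP[w1 wu] _]; have fwu : f w < u by apply: leq_trans (fw w _) _; rewrite ?w1.
by rewrite ltn_eqF.
Qed.

Lemma open_edges_ltn N i j : i.+1 < N ->
  open_edges N i j = (f i.+1 <= j) + open_edges N i.+1 j.
Proof. exact: big_ltn. Qed.

Lemma open_edges_mono N i : {homo open_edges N i : j j' / j <= j'}.
Proof.
move=> j j' jj'; apply: leq_sum => w _.
by case: (leqP (f w) j) => // /leq_trans/(_ jj') ->.
Qed.

Lemma open_edges_nchildren N i j :
  open_edges N i j = nchildren i.+1 N j + prev_entry (open_edges N i) j.
Proof.
case: j => [|j]; first by rewrite addn0; apply: eq_bigr => w _; case: (f w).
rewrite /nchildren /open_edges -big_split; apply: eq_bigr => w _ /=.
by rewrite leq_eqVlt ltnS; case: eqP => [->|_]; rewrite ?ltnn.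
Qed.

End ParentCounts.

Section RankedTrees.
Variable N : nat.
Implicit Type t : {ffun 'I_N -> 'I_N}.

Definition parent_of t (x : nat) : nat := if insub x is Some w then val (t w) else 0.

Definition rank_ordered t : bool :=
  [forall w, if val w == 0 then val (t w) == 0 else val (t w) < val w].

Definition binary t : bool := [forall v, (#|children t v| == 0) || (#|children t v| == 2)].

Definition leaves t : {set 'I_N} := [set v | #|children t v| == 0].

Lemma parent_ofE t (w : 'I_N) : parent_of t (val w) = val (t w).
Proof. by rewrite /parent_of valK. Qed.

Lemma parent_of_lt t x : 0 < N -> parent_of t x < N.
Proof. by move=> N0; rewrite /parent_of; case: (insub x) => // w; apply: ltn_ord. Qed.

Lemma card_ord_nat a (P : pred nat) :
  #|[set w : 'I_N | (a <= w) && P w]| = \sum_(a <= w < N) P w.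
Proof.
rewrite big_geq_mkord -sum1_card big_mkcond [RHS]big_mkcond /=.
by apply: eq_bigr => w _; rewrite inE; case: (a <= w); case: (P w).
Qed.

Lemma card_children t u : #|children t u| = nchildren (parent_of t) 1 N u.
Proof.
rewrite /nchildren -(card_ord_nat 1 (fun w => parent_of t w == u)); apply: eq_card => w.
by rewrite !inE parent_ofE (inj_eq val_inj).
Qed.

Lemma card_open_edges t i j :
  #|[set w | (0 < val w) && (val (t w) <= j) && (i < val w)]| =
  open_edges (parent_of t) N i j.
Proof.
rewrite /open_edges -(card_ord_nat i.+1 (fun w => parent_of t w <= j)).
apply: eq_card => w.
rewrite !inE parent_ofE; case: (ltnP i w) => iw; rewrite ?andbF ?andbT //=.
by rewrite (leq_ltn_trans _ iw).
Qed.

Lemma card_nonleaves t : \sum_u (u \notin leaves t) = N - #|leaves t|.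
Proof.
have := cardsC (leaves t); rewrite card_ord => hC.
rewrite (_ : N - _ = #|~: leaves t|); last by lia.
rewrite -sum1_card [RHS]big_mkcond /=.
by apply: eq_bigr => u _; rewrite !inE; case: (u \in leaves t).
Qed.

Lemma sum_card_children t : 0 < N -> \sum_u #|children t u| = N.-1.
Proof.
move=> N0; rewrite (eq_bigr _ (fun u _ => card_children t u)) exchange_big /=.
rewrite (eq_big_nat _ _ (F2 := fun => 1)) ?sum_nat_const_nat ?muln1 ?subn1 // => w _.
rewrite (bigD1 (Ordinal (parent_of_lt t w N0))) //= eqxx big1 // => u hu.
by apply/eqP; rewrite eqb0; apply: contra hu => /eqP e; apply/eqP/val_inj.
Qed.

Lemma card_leaves t : 0 < N -> binary t -> 2 * #|leaves t| = N.+1.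
Proof.
move=> N0 /forallP bin; have := sum_card_children t N0.
rewrite (eq_bigr (fun u => (u \notin leaves t) * 2)) -?big_distrl /= ?card_nonleaves.
  have := cardsC (leaves t); rewrite card_ord.
  move: #|leaves t| #|~: leaves t| => L C; lia.
by move=> u _; rewrite inE; case/orP: (bin u) => /eqP ->.
Qed.

Lemma prod_fact_children t : binary t ->
  \prod_u (#|children t u|)`! = 2 ^ (N - #|leaves t|).
Proof.
move=> /forallP bin; rewrite -card_nonleaves expn_sum; apply: eq_bigr => u _.
by rewrite inE; case/orP: (bin u) => /eqP ->.
Qed.

End RankedTrees.

Lemma is_rtsE n t : is_rts n t = [&& rank_ordered t, binary t & #|leaves t| == n].
Proof. by rewrite /is_rts -andbA. Qed.

Lemma rank_ordered_parent N (t : {ffun 'I_N -> 'I_N}) w :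
  rank_ordered t -> 0 < w < N -> parent_of t w < w.
Proof.
move=> /forallP ro /andP[w0 wN]; have := ro (Ordinal wN).
by rewrite -(parent_ofE t (Ordinal wN)) /= gtn_eqF.
Qed.

(** * The model as a mixture over choice sequences *)

Lemma entE m (M : 'M[nat]_m) i j (hi : i < m) (hj : j < m) :
  ent M i j = M (Ordinal hi) (Ordinal hj).
Proof. by rewrite /ent !insubT. Qed.

Lemma ent_trig m (M : 'M[nat]_m) i j : is_trig_mx M -> i < j -> ent M i j = 0.
Proof.
move=> /is_trig_mxP trigM ij; rewrite /ent.
case: insubP => [i' _ ei|//]; case: insubP => [j' _ ej|//].
by apply: trigM; rewrite ei ej.
Qed.

Lemma mdiag_nth m (M : 'M[nat]_m) k : k < m -> nth 0 (mdiag M) k = ent M k k.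
Proof. by move=> km; rewrite /mdiag (nth_map 0) ?size_iota // nth_iota. Qed.

Lemma dtd_condE n d M : dtd_cond n d M =
  ((mdiag M == d)%:R * (is_trig_mx M)%:R * \prod_(1 <= k < 2 * n - 2) dtd_step M k)%R.
Proof. by []. Qed.

Definition choice_weight (r : nat -> nat) (L k : nat) : rat :=
  (((r L)%:Z - (prev_entry r L)%:Z)%:~R / (r k.-1)%:R)%R.

Lemma choice_weight_ext r r' L k : r =1 r' -> choice_weight r L k = choice_weight r' L k.
Proof.
by move=> rr'; rewrite /choice_weight /prev_entry !rr'; case: L => [|L] //; rewrite rr'.
Qed.

Lemma choice_weight_neq0 r L k : choice_weight r L k != 0%R -> r L != prev_entry r L.
Proof. by apply: contraNN => /eqP eL; rewrite /choice_weight eL subrr mul0r. Qed.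

Definition row_update (r s : nat -> nat) (k L : nat) : bool :=
  [forall j : 'I_k, s j == r j - (L <= j)].

Lemma row_update_ext r r' s s' k L :
  r =1 r' -> s =1 s' -> row_update r s k L = row_update r' s' k L.
Proof. by move=> rr' ss'; apply: eq_forallb => j; rewrite rr' ss'. Qed.

Definition step_term m (M : 'M[nat]_m) k L : rat :=
  (choice_weight (ent M k.-1) L k * (row_update (ent M k.-1) (ent M k) k L)%:R)%R.

Lemma dtd_stepE m (M : 'M[nat]_m) k : dtd_step M k = (\sum_(L < k) step_term M k L)%R.
Proof. by []. Qed.

Lemma sum_choice_weight r K : r K != 0 -> (\sum_(L < K.+1) choice_weight r L K.+1 = 1)%R.
Proof.
move=> rK; pose g x : rat := ((prev_entry r x)%:R)%R.
rewrite /choice_weight -mulr_suml.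
rewrite (eq_bigr (fun L : 'I_K.+1 => g L.+1 - g L)%R); last first.
  by move=> [[|L] ?] _; rewrite /= ?subr0 ?intrB.
rewrite -(big_mkord xpredT (fun L => g L.+1 - g L)%R) telescope_sumr //.
by rewrite subr0 divff ?pnatr_eq0.
Qed.

Fixpoint choice_seqs (K : nat) : seq (seq nat) :=
  if K is K'.+1 then [seq rcons ls L | ls <- choice_seqs K', L <- iota 0 K] else [:: [::]].

Lemma choice_seqsP K ls : ls \in choice_seqs K ->
  size ls = K /\ forall i, i < K -> nth 0 ls i <= i.
Proof.
elim: K ls => [|K IH] ls; first by rewrite inE => /eqP ->.
case/allpairsP => -[ls' L] [/IH [/= size_ls' ls'_le]].
rewrite /= -[0 :: _]/(iota 0 K.+1) mem_iota => LK ->.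
split=> [|i iK]; first by rewrite size_rcons size_ls'.
rewrite nth_rcons size_ls'; case: ltngtP => [/ls'_le //|//|->]; lia.
Qed.

Lemma prod_dtd_step_expand m (M : 'M[nat]_m) K :
  (\prod_(1 <= k < K.+1) dtd_step M k =
   \sum_(ls <- choice_seqs K) \prod_(1 <= k < K.+1) step_term M k (nth 0 ls k.-1))%R.
Proof.
elim: K => [|K IH]; first by rewrite big_seq1 !big_geq.
rewrite big_nat_recr // IH dtd_stepE [LHS]/= mulr_suml big_allpairs_dep.
apply: eq_big_seq => ls /choice_seqsP [sz _].
rewrite mulr_sumr -[iota 0 K.+1]/(index_iota 0 K.+1) big_mkord; apply: eq_bigr => L _.
rewrite [RHS]big_nat_recr //= nth_rcons sz ltnn eqxx; congr (_ * _)%R.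
by apply: eq_big_nat => k kK; rewrite nth_rcons sz ifT //; lia.
Qed.

Section DiagonalModel.
Variable d : seq nat.

(* [nth 0 ls k] is the rank L chosen when row k.+1 is built. *)
Fixpoint dtd_row (ls : seq nat) (k j : nat) : nat :=
  if k is k'.+1 then
    if j < k then dtd_row ls k' j - (nth 0 ls k' <= j) else (j == k) * nth 0 d k
  else (j == 0) * nth 0 d 0.

Definition dtd_mx n ls : 'M[nat]_(2 * n - 2) := \matrix_(i, j) dtd_row ls i j.

Definition seq_weight ls K : rat :=
  \prod_(1 <= k < K.+1) choice_weight (dtd_row ls k.-1) (nth 0 ls k.-1) k.

Lemma dtd_row_above ls i j : i < j -> dtd_row ls i j = 0.
Proof.
case: i => [|i] ij /=; first by rewrite gtn_eqF.
by rewrite ltnNge (ltnW ij) gtn_eqF.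
Qed.

Lemma dtd_row_diag ls k : dtd_row ls k k = nth 0 d k.
Proof. by case: k => [|k] /=; rewrite ?ltnn ?eqxx ?mul1n. Qed.

Lemma dtd_row_succ ls k j : j <= k -> dtd_row ls k.+1 j = dtd_row ls k j - (nth 0 ls k <= j).
Proof. by move=> jk /=; rewrite ltnS jk. Qed.

Lemma dtd_row_rcons ls L k : k <= size ls -> dtd_row (rcons ls L) k =1 dtd_row ls k.
Proof.
elim: k => [|k IH] ks j //=.
by rewrite IH ?(ltnW ks) // nth_rcons ks.
Qed.

Lemma seq_weight_rcons ls L K : size ls = K ->
  seq_weight (rcons ls L) K.+1 = (seq_weight ls K * choice_weight (dtd_row ls K) L K.+1)%R.
Proof.
move=> sz; rewrite /seq_weight big_nat_recr //=; congr (_ * _)%R.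
  apply: eq_big_nat => k /andP[k1 kK].
  by rewrite nth_rcons ifT; [apply: choice_weight_ext; apply: dtd_row_rcons|]; lia.
by rewrite nth_rcons sz ltnn eqxx; apply: choice_weight_ext; apply: dtd_row_rcons; lia.
Qed.

Lemma sum_seq_weight K : (forall k, k < K -> 0 < nth 0 d k) ->
  (\sum_(ls <- choice_seqs K) seq_weight ls K = 1)%R.
Proof.
elim: K => [|K IH] dpos; first by rewrite big_seq1 /seq_weight big_geq.
rewrite big_allpairs_dep -[RHS](IH _) => [|k kK]; last by apply: dpos; lia.
apply: eq_big_seq => ls /choice_seqsP [sz _].
rewrite (eq_bigr (fun L => seq_weight ls K * choice_weight (dtd_row ls K) L K.+1)%R).
  rewrite -mulr_sumr -[iota 0 K.+1]/(index_iota 0 K.+1) big_mkord sum_choice_weight ?mulr1 //.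
  by rewrite dtd_row_diag -lt0n dpos.
by move=> L _; rewrite seq_weight_rcons.
Qed.

Lemma dtd_mx_trig n ls : is_trig_mx (dtd_mx n ls).
Proof. by apply/is_trig_mxP => i j ij; rewrite mxE dtd_row_above. Qed.

Lemma ent_dtd_mx n ls i : i < 2 * n - 2 -> ent (dtd_mx n ls) i =1 dtd_row ls i.
Proof.
move=> im j; case: (ltnP j (2 * n - 2)) => jm; first by rewrite entE mxE.
by rewrite (ent_trig (dtd_mx_trig n ls)) ?dtd_row_above //; apply: leq_trans jm.
Qed.

Lemma mdiag_dtd_mx n ls : size d = 2 * n - 2 -> mdiag (dtd_mx n ls) = d.
Proof.
move=> sz; apply: (@eq_from_nth _ 0); first by rewrite size_map size_iota sz.
move=> k; rewrite size_map size_iota => km.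
by rewrite mdiag_nth // ent_dtd_mx // dtd_row_diag.
Qed.

Lemma row_update_dtd_row ls k :
  row_update (dtd_row ls k) (dtd_row ls k.+1) k.+1 (nth 0 ls k).
Proof. by apply/forallP => j /=; rewrite ltn_ord. Qed.

Lemma dtd_mx_unique n ls (M : 'M[nat]_(2 * n - 2)) : mdiag M = d -> is_trig_mx M ->
  (forall k, 0 < k < 2 * n - 2 -> row_update (ent M k.-1) (ent M k) k (nth 0 ls k.-1)) ->
  M = dtd_mx n ls.
Proof.
move=> dM trigM upd.
have rowM i : i < 2 * n - 2 -> ent M i =1 dtd_row ls i.
  elim: i => [|i IH] im j.
    case: j => [|j]; first by rewrite -mdiag_nth // dM dtd_row_diag.
    by rewrite (ent_trig trigM) ?dtd_row_above.
  case: (ltngtP j i.+1) => [ji|ij|->]; last by rewrite -mdiag_nth // dM dtd_row_diag.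
    have /forallP/(_ (Ordinal ji))/eqP /= -> := upd i.+1 im.
    by rewrite IH ?(ltnW im) //= ji.
  by rewrite (ent_trig trigM) ?dtd_row_above.
by apply/matrixP => -[i im] [j jm]; rewrite mxE -(entE M im jm) rowM.
Qed.

Lemma prod_step_term n ls (M : 'M[nat]_(2 * n - 2)) : size d = 2 * n - 2 ->
  ((mdiag M == d)%:R * (is_trig_mx M)%:R *
     \prod_(1 <= k < 2 * n - 2) step_term M k (nth 0 ls k.-1) =
   (M == dtd_mx n ls)%:R *
     \prod_(1 <= k < 2 * n - 2) choice_weight (dtd_row ls k.-1) (nth 0 ls k.-1) k)%R.
Proof.
move=> sz; case: (eqVneq M (dtd_mx n ls)) => [->|neM].
  rewrite mdiag_dtd_mx // dtd_mx_trig eqxx !mul1r; apply: eq_big_nat => k /andP[k0 km].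
  have k1m : k.-1 < 2 * n - 2 by lia.
  rewrite /step_term (choice_weight_ext _ _ (ent_dtd_mx ls k1m)).
  rewrite (row_update_ext _ _ (ent_dtd_mx ls k1m) (ent_dtd_mx ls km)).
  by case: k k0 {km k1m} => // k _; rewrite row_update_dtd_row mulr1.
rewrite mul0r; case: (eqVneq (mdiag M) d) => [dM|]; last by rewrite !mul0r.
case trigM: (is_trig_mx M); last by rewrite mulr0 mul0r.
rewrite !mul1r; apply/eqP; apply: contraNT neM; rewrite prodf_seq_neq0 => /allP nz.
apply/eqP/dtd_mx_unique => // k km; have := nz k; rewrite mem_index_iota km => /(_ isT).
by rewrite /step_term; case: row_update; rewrite ?mulr0 ?eqxx.
Qed.

Lemma dtd_cond_expand n (M : 'M[nat]_(2 * n - 2)) : 1 < n -> size d = 2 * n - 2 ->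
  dtd_cond n d M =
  (\sum_(ls <- choice_seqs (2 * n - 3)) (M == dtd_mx n ls)%:R * seq_weight ls (2 * n - 3))%R.
Proof.
move=> n1 sz; have m1 : (2 * n - 3).+1 = 2 * n - 2 by lia.
have := prod_dtd_step_expand M (2 * n - 3); rewrite m1 => expand.
rewrite dtd_condE expand mulr_sumr; apply: eq_bigr => ls _.
by rewrite prod_step_term // /seq_weight m1.
Qed.

End DiagonalModel.

(** * The probability of an F-matrix *)

(* A choice L < L0 is compatible with the update only where r vanishes, and
   then its weight is 0 by monotonicity. *)
Lemma sum_forced_choice (r s : nat -> nat) k L0 : L0 < k ->
  (forall j, j < k -> r j = (L0 <= j) + s j) ->
  (forall i j, i <= j < k -> r i <= r j) ->
  (\sum_(L < k) choice_weight r L k * (row_update r s k L)%:R = choice_weight r L0 k)%R.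
Proof.
move=> L0k rs rmono; rewrite (bigD1 (Ordinal L0k)) //= big1 ?addr0 => [|[L Lk] /= neL].
  suff -> : row_update r s k L0 by rewrite mulr1.
  by apply/forallP => j; rewrite rs ?ltn_ord // addKn.
case upd: row_update; rewrite ?mulr0 // mulr1.
have s_eq j : j < k -> s j = r j - (L <= j).
  by move=> jk; have /forallP/(_ (Ordinal jk))/eqP := upd.
case: (ltngtP L L0) => [LL0|L0L|eL]; last by case/eqP: neL; apply: val_inj.
  have rL0 : r L = 0 by have := s_eq L Lk; rewrite rs // leqnn leqNgt LL0 /=; lia.
  rewrite /choice_weight rL0; suff -> : prev_entry r L = 0 by rewrite subrr mul0r.
  case: L Lk {neL upd s_eq LL0} rL0 => [|L] Lk rL0 //=.
  by apply/eqP; rewrite -leqn0 -rL0 rmono ?leqnSn.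
by have := s_eq L0 (ltn_trans L0L Lk); rewrite rs // leqnn leqNgt L0L /=; lia.
Qed.

Lemma Fmatrix_trig n (t : {ffun 'I_(2 * n - 1) -> 'I_(2 * n - 1)}) : is_trig_mx (Fmatrix t).
Proof. by apply/is_trig_mxP => i j ij; rewrite mxE leqNgt ij. Qed.

Section FmatrixProbability.
Variables (n : nat) (t : {ffun 'I_(2 * n - 1) -> 'I_(2 * n - 1)}).
Hypotheses (n_gt1 : 1 < n) (t_rts : is_rts n t).
Local Notation f := (parent_of t).

Let t_ranked : rank_ordered t.
Proof. by move: t_rts; rewrite is_rtsE => /and3P[]. Qed.

Let t_binary : binary t.
Proof. by move: t_rts; rewrite is_rtsE => /and3P[]. Qed.

Let t_leaves : #|leaves t| = n.
Proof. by move: t_rts; rewrite is_rtsE => /and3P[_ _ /eqP]. Qed.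

Lemma ent_Fmatrix i j : j <= i < 2 * n - 2 ->
  ent (Fmatrix t) i j = open_edges f (2 * n - 1) i j.
Proof.
move=> /andP[ji im]; rewrite (entE _ im (leq_ltn_trans ji im)) mxE /= ji.
exact: card_open_edges.
Qed.

Lemma dtd_step_Fmatrix k : 0 < k < 2 * n - 2 ->
  dtd_step (Fmatrix t) k =
  ((nchildren f k (2 * n - 1) (f k))%:R / (ent (Fmatrix t) k.-1 k.-1)%:R)%R.
Proof.
move=> /andP[k0 km]; have fk : f k < k by apply: rank_ordered_parent => //; lia.
have r_eq j : j < k -> ent (Fmatrix t) k.-1 j = open_edges f (2 * n - 1) k.-1 j.
  by move=> jk; rewrite ent_Fmatrix //; lia.
rewrite dtd_stepE (sum_forced_choice fk).
- rewrite /choice_weight [ent _ _ (f k)]r_eq // open_edges_nchildren prednK //.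
  suff -> : prev_entry (ent (Fmatrix t) k.-1) (f k) =
            prev_entry (open_edges f (2 * n - 1) k.-1) (f k) by rewrite PoszD addrK.
  by case: (f k) fk => [|x] fk //=; rewrite r_eq // ltnW.
- move=> j jk; rewrite r_eq // ent_Fmatrix; last by lia.
  by rewrite open_edges_ltn prednK //; lia.
- move=> i j /andP[ij jk].
  by rewrite !r_eq ?(leq_ltn_trans ij jk) //; apply: open_edges_mono.
Qed.

Lemma prod_nchildren_parent :
  \prod_(1 <= k < 2 * n - 2) nchildren f k (2 * n - 1) (f k) = 2 ^ n.-1.
Proof.
have last_node : \prod_(2 * n - 2 <= k < 2 * n - 1) nchildren f k (2 * n - 1) (f k) = 1.
  rewrite big_ltn; last by lia.
  rewrite big_geq; last by lia.
  by rewrite nchildren_ltn ?eqxx /nchildren ?big_geq //; lia.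
rewrite -[LHS]muln1 -[X in _ * X]last_node -big_cat_nat; [|lia|lia].
rewrite (prod_nchildren_fact (U := 2 * n - 1)) => [|w]; last by apply: parent_of_lt; lia.
rewrite (eq_bigr (fun u => (#|children t u|)`!)) => [|u _]; last by rewrite card_children.
by rewrite prod_fact_children // t_leaves; congr (2 ^ _); lia.
Qed.

Lemma dtd_cond_Fmatrix d : mdiag (Fmatrix t) = d ->
  dtd_cond n d (Fmatrix t) =
  ((2 ^ n.-1)%:R / \prod_(1 <= k < 2 * n - 2) (nth 0 d k.-1)%:R)%R.
Proof.
move=> dF; rewrite dtd_condE dF eqxx Fmatrix_trig !mul1r.
rewrite [LHS](eq_big_nat _ _
  (F2 := fun k => (nchildren f k (2 * n - 1) (f k))%:R / (nth 0 d k.-1)%:R)%R).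
  by rewrite prodf_div -prod_nchildren_parent natr_prod.
by move=> k km; rewrite dtd_step_Fmatrix // -dF mdiag_nth //; lia.
Qed.

End FmatrixProbability.

(** * Choice sequences of positive weight build F-matrices *)

Section MonotoneRows.
Variables (r : nat -> nat) (k : nat).
Hypothesis r_mono : forall i j, i <= j <= k -> r i <= r j.

Lemma prev_entry_lt L : L <= k -> r L != prev_entry r L -> prev_entry r L < r L.
Proof.
case: L => [|L] Lk; first by rewrite lt0n.
by rewrite /= ltn_neqAle eq_sym => ->; rewrite r_mono ?leqnSn.
Qed.

Lemma row_gt0 L j : L <= j <= k -> r L != prev_entry r L -> 0 < r j.
Proof.
move=> /andP[Lj jk] /(prev_entry_lt (leq_trans Lj jk)) rL.
have rLj : r L <= r j by apply: r_mono; rewrite Lj jk.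
lia.
Qed.

Lemma row_update_mono L : L <= k -> r L != prev_entry r L ->
  forall i j, i <= j <= k -> r i - (L <= i) <= r j - (L <= j).
Proof.
move=> Lk /(prev_entry_lt Lk) rL i j /andP[ij jk].
case: (leqP L i) => Li; first by rewrite (leq_trans Li ij) leq_sub2r // r_mono ?ij.
case: (leqP L j) => Lj /=; last by rewrite !subn0 r_mono ?ij.
case: L Lk rL Li Lj => // L Lk rL Li Lj.
have riL : r i <= r L by apply: r_mono; lia.
have rLj : r L.+1 <= r j by apply: r_mono; lia.
rewrite /= in rL; lia.
Qed.

Lemma mono_row_indicator : r k = 1 -> exists2 v, v <= k & forall j, j <= k -> r j = (v <= j).
Proof.
move=> rk; have ex : exists j, 0 < r j by exists k; rewrite rk.
case: (ex_minnP ex) => v rv vmin; have vk : v <= k by apply: vmin; rewrite rk.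
exists v => // j jk; case: (leqP v j) => vj.
  have rvj : r v <= r j by apply: r_mono; lia.
  have rjk : r j <= r k by apply: r_mono; lia.
  lia.
by case: (posnP (r j)) => [//|/vmin]; lia.
Qed.

End MonotoneRows.

Lemma valid_diagP n d : valid_diag n d ->
  [/\ size d = 2 * n - 2, nth 0 d 0 = 2, nth 0 d (2 * n - 3) = 1,
      forall k, k < 2 * n - 2 -> 0 < nth 0 d k &
      forall k, k.+1 < 2 * n - 2 ->
        nth 0 d k.+1 = (nth 0 d k).+1 \/ (nth 0 d k.+1).+1 = nth 0 d k].
Proof.
move=> /andP[/andP[/andP[/andP[/eqP sz /eqP d0] /eqP dlast] /allP dpos] /allP dstep].
split=> // [k km|k km]; first by apply: dpos; rewrite mem_iota.
have kin : k.+1 \in iota 1 (2 * n - 3) by rewrite mem_iota; lia.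
by case/orP: (dstep _ kin) => /eqP; [left|right].
Qed.

Section PositiveWeight.
Variables (n : nat) (d ls : seq nat).
Hypotheses (n_gt1 : 1 < n) (d_valid : valid_diag n d)
  (ls_choice : ls \in choice_seqs (2 * n - 3))
  (weight_neq0 : seq_weight d ls (2 * n - 3) != 0%R).
Local Notation r := (dtd_row d ls).

Let d_size : size d = 2 * n - 2. Proof. by case: (valid_diagP d_valid). Qed.
Let d_root : nth 0 d 0 = 2. Proof. by case: (valid_diagP d_valid). Qed.
Let d_last : nth 0 d (2 * n - 3) = 1. Proof. by case: (valid_diagP d_valid). Qed.
Let d_pos k : k < 2 * n - 2 -> 0 < nth 0 d k.
Proof. by case: (valid_diagP d_valid) => _ _ _ /(_ k). Qed.
Let d_step k : k.+1 < 2 * n - 2 ->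
  nth 0 d k.+1 = (nth 0 d k).+1 \/ (nth 0 d k.+1).+1 = nth 0 d k.
Proof. by case: (valid_diagP d_valid) => _ _ _ _ /(_ k). Qed.
Let ls_le k : k < 2 * n - 3 -> nth 0 ls k <= k.
Proof. by case: (choice_seqsP ls_choice) => _ /(_ k). Qed.

Lemma dtd_row_jump k : k.+1 < 2 * n - 2 -> r k (nth 0 ls k) != prev_entry (r k) (nth 0 ls k).
Proof.
move=> km; apply: (@choice_weight_neq0 _ _ k.+1).
move: weight_neq0; rewrite /seq_weight prodf_seq_neq0 => /allP/(_ k.+1).
by rewrite mem_index_iota; apply; lia.
Qed.

Lemma dtd_row_mono k : k < 2 * n - 2 -> forall i j, i <= j <= k -> r k i <= r k j.
Proof.
elim: k => [|k IH] km i j /andP[ij jk]; first by rewrite (_ : i = j) //; lia.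
have Lk : nth 0 ls k <= k by apply: ls_le; lia.
have upd := row_update_mono (IH (ltnW km)) Lk (dtd_row_jump km).
case: (ltngtP j k.+1) => [jk'|kj|ej]; [by rewrite !dtd_row_succ ?upd //; lia | lia |].
case: (ltngtP i k.+1) => [ik|ki|->]; [|lia|by rewrite ej].
have h : r k i - (nth 0 ls k <= i) <= nth 0 d k - 1.
  by have := upd i k; rewrite dtd_row_diag Lk; apply; lia.
by rewrite ej dtd_row_succ ?dtd_row_diag; [case: (d_step km) => e; lia | lia].
Qed.

Lemma dtd_row_gt0 k j : k.+1 < 2 * n - 2 -> nth 0 ls k <= j <= k -> 0 < r k j.
Proof. by move=> km Lj; apply: (row_gt0 (dtd_row_mono (ltnW km)) Lj); apply: dtd_row_jump. Qed.

Lemma dtd_row_last :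
  exists2 v, v <= 2 * n - 3 & forall j, j <= 2 * n - 3 -> r (2 * n - 3) j = (v <= j).
Proof.
have m3 : 2 * n - 3 < 2 * n - 2 by lia.
by apply: (mono_row_indicator (dtd_row_mono m3)); rewrite dtd_row_diag.
Qed.

Section ParentFunction.
Variable v : nat.
Hypotheses (v_le : v <= 2 * n - 3)
  (last_row : forall j, j <= 2 * n - 3 -> r (2 * n - 3) j = (v <= j)).

(* Node 2n-2 is attached to the last open edge, whose parent v is read off the
   last row. *)
Definition dtd_parent (x : nat) : nat :=
  if x == 0 then 0 else if x < 2 * n - 2 then nth 0 ls x.-1 else v.
Local Notation par := dtd_parent.

Lemma dtd_parent_lt x : 0 < x < 2 * n - 1 -> par x < x.
Proof.
move=> /andP[x0 xN]; rewrite /dtd_parent gtn_eqF //.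
by case: (ltnP x (2 * n - 2)) => xm; [have := @ls_le x.-1 | ]; lia.
Qed.

Lemma dtd_parent_bound x : par x < 2 * n - 1.
Proof.
case: (posnP x) => [->|x0]; first by rewrite /dtd_parent /=; lia.
case: (ltnP x (2 * n - 1)) => xN; first by have := @dtd_parent_lt x; lia.
rewrite /dtd_parent gtn_eqF // (_ : x < 2 * n - 2 = false); first by lia.
by apply/negbTE; rewrite -leqNgt; lia.
Qed.

Lemma open_edges_dtd_parent i j : i < 2 * n - 2 -> j <= i ->
  open_edges par (2 * n - 1) i j = r i j.
Proof.
elim: {i}(2 * n - 3 - i) {-2}i (erefl (2 * n - 3 - i)) => [|p IH] i ip im ji.
  have ei : i = 2 * n - 3 by lia.
  rewrite open_edges_ltn; last by lia.
  rewrite /open_edges big_geq; last by lia.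
  rewrite /dtd_parent ei (_ : (2 * n - 3).+1 = 2 * n - 2) ?ltnn; last by lia.
  by rewrite gtn_eqF ?addn0 ?last_row //; lia.
rewrite open_edges_ltn; last by lia.
rewrite IH; [|lia|lia|lia].
rewrite dtd_row_succ // /dtd_parent /= ifT; last by lia.
case: (leqP (nth 0 ls i) j) => Lj; last by rewrite subn0.
by rewrite add1n subn1 prednK // dtd_row_gt0 ?Lj; lia.
Qed.

Lemma nchildren_dtd_parent u : u < 2 * n - 1 ->
  (nchildren par 1 (2 * n - 1) u == 0) || (nchildren par 1 (2 * n - 1) u == 2).
Proof.
move=> uN; rewrite nchildren_above //; last by move=> w w0; apply: dtd_parent_lt; lia.
case: (ltnP u (2 * n - 2)) => um; last by rewrite /nchildren big_geq //; lia.
have := open_edges_nchildren par (2 * n - 1) u u.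
rewrite open_edges_dtd_parent // dtd_row_diag.
case: u uN um => [|u] uN um /=; first by rewrite d_root addn0 => <-.
have Lu : nth 0 ls u <= u by apply: ls_le; lia.
rewrite open_edges_dtd_parent // dtd_row_succ // dtd_row_diag Lu => e.
have du := d_pos (ltnW um); apply/orP; case: (d_step um) => e'; [right|left]; apply/eqP; lia.
Qed.

Definition dtd_tree : {ffun 'I_(2 * n - 1) -> 'I_(2 * n - 1)} :=
  [ffun w : 'I_(2 * n - 1) => Ordinal (dtd_parent_bound w)].

Lemma parent_of_dtd_tree x : x < 2 * n - 1 -> parent_of dtd_tree x = par x.
Proof. by move=> xN; rewrite /parent_of insubT /= ffunE. Qed.

Lemma Fmatrix_dtd_tree : Fmatrix dtd_tree = dtd_mx d n ls.
Proof.
apply/matrixP => i j; rewrite !mxE; case: leqP => ji; last by rewrite dtd_row_above.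
rewrite card_open_edges -open_edges_dtd_parent //.
by apply: eq_big_nat => w /andP[_ wN]; rewrite parent_of_dtd_tree.
Qed.

Lemma dtd_tree_rts : is_rts n dtd_tree.
Proof.
have tree_bin : binary dtd_tree.
  apply/forallP => u; rewrite card_children.
  have -> : nchildren (parent_of dtd_tree) 1 (2 * n - 1) u = nchildren par 1 (2 * n - 1) u.
    by apply: eq_big_nat => w /andP[_ wN]; rewrite parent_of_dtd_tree.
  exact: nchildren_dtd_parent.
rewrite is_rtsE tree_bin /=; apply/andP; split.
  apply/forallP => w; rewrite -parent_ofE; case: w => w wN /=.
  rewrite parent_of_dtd_tree //; case: eqP => [->|w0] //.
  by apply: dtd_parent_lt; rewrite wN andbT lt0n; apply/eqP.
apply/eqP; have := card_leaves _ tree_bin.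
by move: #|leaves _| => L; lia.
Qed.

End ParentFunction.

Lemma dtd_mx_in_Fmats : dtd_mx d n ls \in Fmats_with_diag n d.
Proof.
have [v v_le last_row] := dtd_row_last.
rewrite /Fmats_with_diag mem_undup -(Fmatrix_dtd_tree v_le last_row); apply: map_f.
by rewrite mem_enum inE (dtd_tree_rts v_le last_row) Fmatrix_dtd_tree ?mdiag_dtd_mx ?eqxx.
Qed.

End PositiveWeight.

(** * Uniformity *)

Lemma dtd_cond_Fmats n d M : 1 < n -> M \in Fmats_with_diag n d ->
  dtd_cond n d M = ((2 ^ n.-1)%:R / \prod_(1 <= k < 2 * n - 2) (nth 0 d k.-1)%:R)%R.
Proof.
move=> n1; rewrite /Fmats_with_diag mem_undup => /mapP[t].
by rewrite mem_enum inE => /andP[t_rts /eqP dF] ->; apply: dtd_cond_Fmatrix.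
Qed.

Lemma sum_dtd_cond_Fmats n d : 1 < n -> valid_diag n d ->
  (\sum_(X <- Fmats_with_diag n d) dtd_cond n d X = 1)%R.
Proof.
move=> n1 dv; have [sz _ _ dpos _] := valid_diagP dv.
rewrite (eq_bigr _ (fun X _ => dtd_cond_expand X n1 sz)) exchange_big /=.
rewrite -[RHS](@sum_seq_weight d (2 * n - 3)) => [|k k3]; last by apply: dpos; lia.
apply: eq_big_seq => ls ls_choice; rewrite -mulr_suml.
have [->|W] := eqVneq (seq_weight d ls (2 * n - 3)) 0%R; first by rewrite !mulr0.
rewrite (big_rem _ (dtd_mx_in_Fmats n1 dv ls_choice W)) eqxx big1_seq ?addr0 ?mul1r //.
move=> X /andP[_]; rewrite mem_rem_uniq ?undup_uniq // inE.
by case/andP => /negbTE ->.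
Qed.

Lemma dtd_cond_notin_Fmats n d M : 1 < n -> valid_diag n d -> M \notin Fmats_with_diag n d ->
  dtd_cond n d M = 0%R.
Proof.
move=> n1 dv MF; have [sz _ _ _ _] := valid_diagP dv.
rewrite dtd_cond_expand //; apply: big1_seq => ls /andP[_ ls_choice].
have [eM|] := eqVneq M (dtd_mx d n ls); last by rewrite mul0r.
have [->|W] := eqVneq (seq_weight d ls (2 * n - 3)) 0%R; first by rewrite mulr0.
by move: MF; rewrite eM dtd_mx_in_Fmats.
Qed.

Local Open Scope ring_scope.

Theorem proposition4 (n : nat) (hn : (2 <= n)%N) (d : seq nat)
  (hd : valid_diag n d) (M : 'M[nat]_(2 * n - 2)) :
  dtd_cond n d M =
  (if M \in Fmats_with_diag n d
   then ((size (Fmats_with_diag n d))%:R)^-1 else 0).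
Proof.
pose c : rat := (2 ^ n.-1)%:R / \prod_(1 <= k < 2 * n - 2) (nth 0 d k.-1)%:R.
have := sum_dtd_cond_Fmats hn hd.
rewrite (eq_big_seq (fun=> c)) => [|X]; last exact: dtd_cond_Fmats.
rewrite big_const_seq count_predT iter_addr addr0 => size_c.
have {}size_c : (size (Fmats_with_diag n d))%:R * c = 1 by rewrite mulr_natl.
case: ifP => MF; first by rewrite (mulr1_eq size_c) dtd_cond_Fmats.
by rewrite dtd_cond_notin_Fmats ?MF.
Qed.
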